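(* Let $f:\mathbb{R}^n\to\mathbb{R}$ be differentiable and $c:\mathbb{R}^n\to\mathbb{R}^m$ differentiable with Jacobian $J(\cdot)$, and let $x\in\mathbb{R}^n$, $L,\Gamma>0$ be such that for all $s$ on the segment $\{\alpha\bar d:\alpha\in[0,1]\}$, $f(x+s)\le f(x)+\nabla f(x)^Ts+\tfrac L2\|s\|_2^2$ and $\|c(x+s)-c(x)-J(x)s\|_1\le\tfrac\Gamma2\|s\|_2^2$. Write $g=\nabla f(x)$, $c=c(x)$, $J=J(x)$, and let $\phi(z,\tau):=\tau f(z)+\|c(z)\|_1$. Let $d,\tilde d,\bar d,\bar g\in\mathbb{R}^n$ with $c+Jd=0$ and $c+J\tilde d=0$, let $\tau,\bar\tau>0$, $\eta\in(0,1)$, $\beta\in(0,1]$, $\sigma\in[2,4]$, and let $\bar\alpha\in(0,1]$ satisfy $\bar\alpha\le\dfrac{2(1-\eta)\beta^{\sigma/2-1}\Delta l(\bar\tau,\bar g,\bar d)}{(\bar\tau L+\Gamma)\|\bar d\|_2^2}$ (with $\bar d\neq0$). Then $$\phi(x+\bar\alpha\bar d,\bar\tau)-\phi(x,\bar\tau)\le-\bar\alpha\Delta l(\tau,g,d)+(1-\eta)\bar\alpha\beta^{\sigma/2-1}\Delta l(\bar\tau,\bar g,\bar d)+\bar\alpha\bar\tau g^T(\bar d-d)+\bar\alpha(\bar\tau-\tau)g^Td+\bar\alpha\|J(\bar d-\tilde d)\|_1.$$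
   Context: $\Delta l(\tau,g,d):=-\tau g^Td+\|c\|_1-\|c+Jd\|_1$ with $c=c(x)$, $J=J(x)$. *)

From HB Require Import structures.
From mathcomp Require Import all_boot all_order all_algebra.
From mathcomp Require Import all_classical all_reals all_analysis.
Set Implicit Arguments. Unset Strict Implicit. Unset Printing Implicit Defensive.
Import Order.TTheory GRing.Theory Num.Theory.
Import numFieldNormedType.Exports.
Local Open Scope ring_scope.

Definition dotv {R : numDomainType} {n : nat} (u v : 'cV[R]_n) : R :=
  \sum_(i < n) u i 0 * v i 0.

Definition norm1 {R : numDomainType} {k : nat} (v : 'cV[R]_k) : R :=
  \sum_(i < k) `|v i 0|.

Definition sqnorm2 {R : numDomainType} {k : nat} (v : 'cV[R]_k) : R :=
  \sum_(i < k) v i 0 ^+ 2.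

(* Delta l(tau, g, d) := - tau g^T d + ||c||_1 - ||c + J d||_1,  with c = c(x), J = J(x) *)
Definition Delta_l {R : numDomainType} {n m : nat} (c : 'cV[R]_m) (J : 'M[R]_(m, n))
  (tau : R) (g d : 'cV[R]_n) : R :=
  - (tau * dotv g d) + norm1 c - norm1 (c + J *m d).

Definition phi {R : numDomainType} {n m : nat} (f : 'cV[R]_n -> R)
  (c : 'cV[R]_n -> 'cV[R]_m) (z : 'cV[R]_n) (tau : R) : R :=
  tau * f z + norm1 (c z).

From HB Require Import structures.
From mathcomp Require Import all_boot all_order all_algebra.
From mathcomp Require Import all_classical all_reals all_analysis.
From mathcomp Require Import ring lra.
Import Order.TTheory GRing.Theory Num.Theory.
Import numFieldNormedType.Exports.
Local Open Scope ring_scope.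

(* Write a := alphab, P := ||db||_2^2, e := c(x + a db) - c - J (a db).
   Since c + J dt = 0, the constraint value splits as
       c(x + a db) = e + (1 - a) c + a J (db - dt),
   so, by the triangle inequality and a in [0,1],
       ||c(x + a db)||_1 <= ||e||_1 + (1 - a)||c||_1 + a ||J (db - dt)||_1.
   Together with the two quadratic upper bounds this gives the model bound
       phi(x + a db) - phi(x) <= a taub g^T db - a ||c||_1
                                 + a ||J (db - dt)||_1 + a^2/2 (taub L + Gamma) P.
   The step-size condition turns the quadratic term into at most
   a (1 - eta) beta^(sigma/2-1) Delta_l(taub, gb, db), and since c + J d = 0,
   Delta_l(tau, g, d) = -tau g^T d + ||c||_1; the claim is then a linear
   rearrangement of these quantities. *)

Lemma dotvZ {R : numDomainType} {n} (g v : 'cV[R]_n) a :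
  dotv g (a *: v) = a * dotv g v.
Proof. by rewrite /dotv mulr_sumr; apply: eq_bigr => i _; rewrite mxE mulrCA. Qed.

Lemma dotvB {R : numDomainType} {n} (g u v : 'cV[R]_n) :
  dotv g (u - v) = dotv g u - dotv g v.
Proof. by rewrite /dotv -sumrB; apply: eq_bigr => i _; rewrite !mxE mulrBr. Qed.

Lemma sqnorm2Z {R : numDomainType} {n} (v : 'cV[R]_n) a :
  sqnorm2 (a *: v) = a ^+ 2 * sqnorm2 v.
Proof. by rewrite /sqnorm2 mulr_sumr; apply: eq_bigr => i _; rewrite mxE exprMn. Qed.

Lemma sqnorm2_gt0 {R : realDomainType} {n} (v : 'cV[R]_n) : v != 0 -> 0 < sqnorm2 v.
Proof.
move=> v_neq0; have [i vi_neq0] : exists i, v i 0 != 0.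
  apply/existsP; apply: contraR v_neq0 => /existsPn v_eq0.
  by apply/eqP/matrixP => a b; rewrite (ord1 b) mxE; exact/eqP/negbNE/v_eq0.
have vi2_gt0 : 0 < v i 0 ^+ 2 by rewrite lt_def sqr_ge0 sqrf_eq0 vi_neq0.
by rewrite /sqnorm2 (bigD1 i) //= ltr_pwDl // sumr_ge0 // => j _; rewrite sqr_ge0.
Qed.

Lemma norm10 {R : numDomainType} {k} : norm1 (0 : 'cV[R]_k) = 0.
Proof. by rewrite /norm1 big1 // => i _; rewrite mxE normr0. Qed.

Lemma norm1D {R : numDomainType} {k} (u v : 'cV[R]_k) :
  norm1 (u + v) <= norm1 u + norm1 v.
Proof. by rewrite /norm1 -big_split /=; apply: ler_sum => i _; rewrite mxE ler_normD. Qed.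

Lemma norm1Z {R : numDomainType} {k} (v : 'cV[R]_k) a :
  norm1 (a *: v) = `|a| * norm1 v.
Proof. by rewrite /norm1 mulr_sumr; apply: eq_bigr => i _; rewrite mxE normrM. Qed.

Lemma norm1_convex_comb {R : realDomainType} {k} (e u v : 'cV[R]_k) a :
  0 <= a <= 1 ->
  norm1 (e + ((1 - a) *: u + a *: v)) <= norm1 e + (1 - a) * norm1 u + a * norm1 v.
Proof.
case/andP=> a_ge0 a_le1.
rewrite -addrA (le_trans (norm1D _ _)) // lerD2l (le_trans (norm1D _ _)) //.
by rewrite !norm1Z !ger0_norm ?subr_ge0.
Qed.

Lemma constraint_split {R : comNzRingType} {n m} (c0 cn : 'cV[R]_m) (J : 'M[R]_(m, n))
    (db dt : 'cV[R]_n) a :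
  c0 + J *m dt = 0 ->
  cn = (cn - c0 - J *m (a *: db)) + ((1 - a) *: c0 + a *: (J *m (db - dt))).
Proof.
move=> lin_dt; have Jdt : J *m dt = - c0 by apply/eqP; rewrite -addr_eq0 addrC lin_dt.
rewrite mulmxBr Jdt -scalemxAr; apply/matrixP => i j; rewrite !mxE; ring.
Qed.

Lemma merit_change_bound {R : realType} {n m} (f : 'cV[R]_n -> R)
    (c : 'cV[R]_n -> 'cV[R]_m) (x g : 'cV[R]_n) (J : 'M[R]_(m, n))
    (L Gamma : R) (db dt : 'cV[R]_n) (taub a : R) :
  0 <= taub -> 0 <= a <= 1 ->
  f (x + a *: db) <= f x + dotv g (a *: db) + L / 2 * sqnorm2 (a *: db) ->
  norm1 (c (x + a *: db) - c x - J *m (a *: db)) <= Gamma / 2 * sqnorm2 (a *: db) ->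
  c x + J *m dt = 0 ->
  phi f c (x + a *: db) taub - phi f c x taub <=
    a * taub * dotv g db - a * norm1 (c x) + a * norm1 (J *m (db - dt))
    + a ^+ 2 / 2 * (taub * L + Gamma) * sqnorm2 db.
Proof.
move=> taub_ge0 a01 f_quad c_quad lin_dt.
rewrite dotvZ sqnorm2Z in f_quad; rewrite sqnorm2Z in c_quad.
have c_step := norm1_convex_comb (c (x + a *: db) - c x - J *m (a *: db))
  (c x) (J *m (db - dt)) _ a01.
rewrite -(constraint_split _ _ _ _ _ _ lin_dt) in c_step.
have f_step := ler_wpM2l taub_ge0 f_quad.
rewrite /phi; move: f_step c_step c_quad.
move: (f _) (f x) (norm1 (c _)) (norm1 (c x)) (norm1 (_ - _ - _))
  (norm1 (J *m _)) (dotv g db) (sqnorm2 db) => F1 F0 C1 C0 E JD gdb P.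
move=> f_step c_step c_quad; nra.
Qed.

Lemma quadratic_term_le {R : realFieldType} (a K M P : R) :
  0 <= a -> 0 < M * P -> a <= 2 * K / (M * P) ->
  a ^+ 2 / 2 * M * P <= a * K.
Proof.
move=> a_ge0 MP_gt0; rewrite ler_pdivlMr // => a_le.
have := ler_wpM2l a_ge0 a_le; rewrite -!mulrA; nra.
Qed.

Theorem lemma4p8 (R : realType) (n m : nat)
  (f : 'cV[R]_n -> R) (c : 'cV[R]_n -> 'cV[R]_m)
  (x g : 'cV[R]_n) (J : 'M[R]_(m, n)) (L Gamma : R)
  (d dt db gb : 'cV[R]_n) (tau taub eta beta sigma alphab : R) :
  (forall z, differentiable f z) ->
  (forall z, differentiable c z) ->
  (* g = grad f(x) *)
  (forall s, 'd f x s = dotv g s) ->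
  (* J = J(x), the Jacobian of c at x *)
  (forall s, 'd c x s = J *m s) ->
  0 < L -> 0 < Gamma ->
  (forall a, 0 <= a <= 1 ->
     f (x + a *: db) <= f x + dotv g (a *: db) + L / 2 * sqnorm2 (a *: db)) ->
  (forall a, 0 <= a <= 1 ->
     norm1 (c (x + a *: db) - c x - J *m (a *: db)) <= Gamma / 2 * sqnorm2 (a *: db)) ->
  c x + J *m d = 0 ->
  c x + J *m dt = 0 ->
  0 < tau -> 0 < taub ->
  0 < eta < 1 -> 0 < beta <= 1 -> 2 <= sigma <= 4 ->
  0 < alphab <= 1 ->
  db != 0 ->
  alphab <= 2 * (1 - eta) * beta `^ (sigma / 2 - 1) * Delta_l (c x) J taub gb db
            / ((taub * L + Gamma) * sqnorm2 db) ->
  phi f c (x + alphab *: db) taub - phi f c x taub <=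
    - (alphab * Delta_l (c x) J tau g d)
    + (1 - eta) * alphab * beta `^ (sigma / 2 - 1) * Delta_l (c x) J taub gb db
    + alphab * taub * dotv g (db - d)
    + alphab * (taub - tau) * dotv g d
    + alphab * norm1 (J *m (db - dt)).
Proof.
move=> _ _ _ _ L_gt0 Gamma_gt0 f_quad c_quad lin_d lin_dt _ taub_gt0 _ _ _
  /andP[a_gt0 a_le1] db_neq0 a_le.
have a01 : 0 <= alphab <= 1 by rewrite ltW.
have model := @merit_change_bound R n m f c x g J L Gamma db dt taub alphab
  (ltW taub_gt0) a01 (f_quad _ a01) (c_quad _ a01) lin_dt.
have MP_gt0 : 0 < (taub * L + Gamma) * sqnorm2 db.
  by rewrite mulr_gt0 ?sqnorm2_gt0 ?addr_gt0 ?mulr_gt0.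
rewrite -[2 * _ * _ * _]mulrA -[2 * _ * _]mulrA in a_le.
have quad := quadratic_term_le _ _ _ _ (ltW a_gt0) MP_gt0 a_le.
have Delta_d : Delta_l (c x) J tau g d = - (tau * dotv g d) + norm1 (c x).
  by rewrite /Delta_l lin_d norm10 subr0.
(* What remains is linear in the quantities below, viewed as atoms. *)
rewrite Delta_d dotvB; move: model quad.
move: (phi _ _ _ _) (phi _ _ _ _) (norm1 (c x)) (norm1 (J *m _)) (dotv g d)
  (dotv g db) (sqnorm2 db) (beta `^ _) (Delta_l _ _ _ gb _)
  => phi1 phi0 C0 JD gd gdb P B D model quad.
by clear -model quad; lra.
Qed.
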